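(* Consider a finite-horizon tabular MDP with stationary transition kernel $P$, $S$ states, $A$ actions, horizon $H$, and $m$ i.i.d. episodes from behavior policy $\mu$; for each $t\in[H]$ let $V^{\rm in}_{t+1}:\mathcal S\to[0,H]$ be fixed (not depending on the data). With $n_{s,a}=\sum_{i=1}^m\sum_{u=1}^H\mathbf 1[s^{(i)}_u=s,a^{(i)}_u=a]$, define $\tilde\sigma_{V^{\rm in}_{t+1}}(s,a)=\sigma_{V^{\rm in}_{t+1}}(s,a)$ if $n_{s,a}\le\frac12m\sum_{t=1}^Hd^\mu_t(s,a)$, and otherwise \[ \tilde\sigma_{V^{\rm in}_{t+1}}(s,a)=\frac1{n_{s,a}}\sum_{i=1}^m\sum_{u=1}^H[V^{\rm in}_{t+1}(s^{(i)}_{u+1})]^2\mathbf 1[s^{(i)}_u=s,a^{(i)}_u=a]-\tilde z_t(s,a)^2, \] where $\tilde z_t(s,a)=\frac1{n_{s,a}}\sum_{i=1}^m\sum_{u=1}^HV^{\rm in}_{t+1}(s^{(i)}_{u+1})\mathbf 1[s^{(i)}_u=s,a^{(i)}_u=a]$. Then with probability at least $1-\delta$, for all $t\in[H]$ and $(s,a)$ with $\sum_td^\mu_t(s,a)>0$, \[ \big|\tilde\sigma_{V^{\rm in}_{t+1}}(s,a)-\sigma_{V^{\rm in}_{t+1}}(s,a)\big|\le6H^2\sqrt{\frac{\log(4HSA/\delta)}{m\sum_{t=1}^Hd^\mu_t(s,a)}}+\frac{4H^2\log(4HSA/\delta)}{m\sum_{t=1}^Hd^\mu_t(s,a)}. 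\]
   Context: Episodes: $s_1\sim d_1$, $a_u\sim\mu_u(\cdot|s_u)$, $s_{u+1}\sim P(\cdot|s_u,a_u)$. $d^\mu_t(s,a)=\mathbb P^\mu(s_t=s,a_t=a)$. $\sigma_V(s,a)=\mathrm{Var}_{s'\sim P(\cdot|s,a)}[V(s')]$. $\delta\in(0,1)$. *)

From HB Require Import structures.
From mathcomp Require Import all_boot all_order all_algebra.
From mathcomp Require Import reals exp.
Set Implicit Arguments. Unset Strict Implicit. Unset Printing Implicit Defensive.
Import Order.TTheory GRing.Theory Num.Theory.
Local Open Scope ring_scope.

Section Defs.
Variables (R : realType) (S A : finType) (H : nat).

(* An episode: states s_1..s_{H+1} (indices 0..H) and actions a_1..a_H (0..H-1). *)
Definition traj := ({ffun 'I_H.+1 -> S} * {ffun 'I_H -> A})%type.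

Definition st (tr : traj) (u : 'I_H) : S := tr.1 (widen_ord (leqnSn H) u).
Definition st_next (tr : traj) (u : 'I_H) : S := tr.1 (lift ord0 u).
Definition act (tr : traj) (u : 'I_H) : A := tr.2 u.

Variables (d1 : S -> R) (mu : 'I_H -> S -> A -> R) (P : S -> A -> S -> R).

Definition is_distr (T : finType) (p : T -> R) :=
  (forall x, 0 <= p x) /\ \sum_(x : T) p x = 1.

Definition traj_prob (tr : traj) : R :=
  d1 (tr.1 ord0) *
  \prod_(u < H) (mu u (st tr u) (act tr u) * P (st tr u) (act tr u) (st_next tr u)).

Definition dmu (t : 'I_H) (s : S) (a : A) : R :=
  \sum_(tr : traj | (st tr t == s) && (act tr t == a)) traj_prob tr.

Definition sigmaV (V : S -> R) (s : S) (a : A) : R :=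
  \sum_(s' : S) P s a s' * V s' ^+ 2 - (\sum_(s' : S) P s a s' * V s') ^+ 2.

Variable m : nat.
Definition dataset := {ffun 'I_m -> traj}.

Definition Pr_data (E : pred dataset) : R :=
  \sum_(D : dataset | E D) \prod_(i < m) traj_prob (D i).

Definition n_sa (D : dataset) (s : S) (a : A) : nat :=
  \sum_(i < m) \sum_(u < H) ((st (D i) u == s) && (act (D i) u == a) : nat).

Definition z_tilde (V : S -> R) (D : dataset) (s : S) (a : A) : R :=
  (n_sa D s a)%:R^-1 *
  \sum_(i < m) \sum_(u < H | (st (D i) u == s) && (act (D i) u == a)) V (st_next (D i) u).

Definition sigma_tilde (V : S -> R) (D : dataset) (s : S) (a : A) : R :=
  if (n_sa D s a)%:R <= 2^-1 * m%:R * \sum_(t < H) dmu t s a then sigmaV V s a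
  else (n_sa D s a)%:R^-1 *
       \sum_(i < m) \sum_(u < H | (st (D i) u == s) && (act (D i) u == a))
          V (st_next (D i) u) ^+ 2
       - z_tilde V D s a ^+ 2.

End Defs.

From HB Require Import structures.
From mathcomp Require Import all_boot all_order all_algebra.
From mathcomp Require Import reals sequences exp.
From mathcomp Require Import ring lra.
Set Implicit Arguments. Unset Strict Implicit. Unset Printing Implicit Defensive.
Import Order.TTheory GRing.Theory Num.Theory.
Local Open Scope ring_scope.

(* Fix (t, s, a) and let W be V^in_{t+1} or its square, rescaled into [0, 1].  Summing
   λ (±(W(s') - E_{P(.|s,a)} W)) - λ^2/2 over all visits of (s, a) in the data gives a
   quantity whose exponential has expectation at most 1: at each visit the next state is
   drawn from P(.|s, a), and a centred variable with values in [-1, 1] and variance at most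
   1/4 has E exp(λY - λ^2/2) <= 1 for λ <= 1.  By Markov's inequality and a union bound over
   t, s, a, the two moments and the two signs, with probability at least 1 - δ all these sums
   stay below L = log(4HSA/δ).  For N = m Σ_t d^μ_t(s, a) and λ = 2 sqrt(L/N) this bounds
   the deviation of both empirical moments by 2 sqrt(L/N) whenever n_{s,a} > N/2, while below
   that threshold the estimator is σ itself.  Comparing the variances through the two
   moments gives the factor 6 H^2. *)

Section ExponentialMoments.
Variable R : realType.

Lemma expR_le_quadratic (y : R) : y <= 1 -> expR y <= 1 + y + 2 * y ^+ 2.
Proof.
(* e^{y/2} (1 - y/2) <= 1, and (1 + y + 2 y^2)(1 - y/2)^2 = 1 + y^2 (5 - 2y)(1 - y) / 4 >= 1 *)
move=> y_le1.
set e := expR (y / 2).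
have e_gt0 : 0 < e := expR_gt0 _.
have e_half : e * (1 - y / 2) <= 1.
  have := ler_wpM2l (ltW e_gt0) (expR_ge1Dx (- (y / 2))).
  by rewrite expRN -/e mulfV ?gt_eqF.
have -> : expR y = e ^+ 2 by rewrite -expRM_natl; congr expR; field.
have poly_ge1 : 1 <= (1 + y + 2 * y ^+ 2) * (1 - y / 2) ^+ 2.
  have : 0 <= y ^+ 2 * ((5 - 2 * y) * (1 - y)) by apply: mulr_ge0; nra.
  nra.
have e_sq : (e * (1 - y / 2)) ^+ 2 <= 1 by rewrite expr_le1 //; nra.
have Q_ge0 : 0 <= 1 + y + 2 * y ^+ 2 by nra.
have := ler_wpM2l (sqr_ge0 e) poly_ge1; have := ler_wpM2l Q_ge0 e_sq.
rewrite mulr1 exprMn; nra.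
Qed.

Lemma mgf_centered_le1 (T : finType) (p Y : T -> R) (lam : R) :
  (forall x, 0 <= p x) -> \sum_x p x = 1 -> \sum_x p x * Y x = 0 ->
  \sum_x p x * Y x ^+ 2 <= 4^-1 -> (forall x, Y x <= 1) -> 0 <= lam <= 1 ->
  \sum_x p x * expR (lam * Y x - lam ^+ 2 / 2) <= 1.
Proof.
move=> p_ge0 p_sum1 p_mean0 p_var Y_le1 /andP[lam_ge0 lam_le1].
set c := lam ^+ 2 / 2.
have pointwise x : p x * expR (lam * Y x - c) <=
    expR (- c) * (p x + lam * (p x * Y x) + 2 * lam ^+ 2 * (p x * Y x ^+ 2)).
  rewrite expRD mulrA mulrC ler_wpM2l ?expR_ge0 //.
  have -> : p x + lam * (p x * Y x) + 2 * lam ^+ 2 * (p x * Y x ^+ 2) =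
      p x * (1 + lam * Y x + 2 * (lam * Y x) ^+ 2) by ring.
  by rewrite ler_wpM2l // expR_le_quadratic //; have := Y_le1 x; nra.
apply: le_trans (ler_sum _ (fun x _ => pointwise x)) _.
rewrite -mulr_sumr !big_split /= -!mulr_sumr p_sum1 p_mean0 mulr0 addr0.
have mgf_c : 1 + 2 * lam ^+ 2 * \sum_x p x * Y x ^+ 2 <= expR c.
  by apply: le_trans (expR_ge1Dx c); rewrite /c; nra.
apply: le_trans (ler_wpM2l (expR_ge0 (- c)) mgf_c) _.
by rewrite expRN mulVf ?gt_eqF ?expR_gt0.
Qed.

Lemma mgf_unit_interval_le1 (T : finType) (p W : T -> R) (sg : bool) (lam : R) :
  (forall x, 0 <= p x) -> \sum_x p x = 1 -> (forall x, 0 <= W x <= 1) -> 0 <= lam <= 1 ->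
  \sum_x p x * expR (lam * ((-1) ^+ sg * (W x - \sum_y p y * W y)) - lam ^+ 2 / 2) <= 1.
Proof.
move=> p_ge0 p_sum1 W01 lam01; set w := \sum_y p y * W y.
have w01 : 0 <= w <= 1.
  rewrite sumr_ge0 => [|x _]; last by have := W01 x; case/andP=> *; apply: mulr_ge0.
  rewrite -p_sum1 ler_sum // => x _; rewrite ler_piMr //; by case/andP: (W01 x).
apply: mgf_centered_le1 => //.
- have centered x : p x * ((-1) ^+ sg * (W x - w)) = (-1) ^+ sg * (p x * W x - w * p x).
    by ring.
  by rewrite (eq_bigr _ (fun x _ => centered x)) -mulr_sumr big_split /= sumrN
    -mulr_sumr p_sum1 mulr1 subrr mulr0.
- have var x : p x * ((-1) ^+ sg * (W x - w)) ^+ 2 =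
      p x * W x ^+ 2 - 2 * w * (p x * W x) + w ^+ 2 * p x.
    by rewrite exprMn sqrr_sign mul1r; ring.
  rewrite (eq_bigr _ (fun x _ => var x)) !big_split /= sumrN -!mulr_sumr p_sum1 mulr1 -/w.
  have : \sum_x p x * W x ^+ 2 <= w.
    apply: ler_sum => x _; apply: ler_wpM2l => //.
    by case/andP: (W01 x) => W0 W1; rewrite expr2 ler_piMr.
  have : 0 <= (w - 2^-1) ^+ 2 := sqr_ge0 _.
  lra.
- move=> x; have := W01 x; move: w01; case: sg; rewrite ?expr0 ?expr1; lra.
Qed.

Lemma mulr_expRNln_div_le (x d : R) : 0 <= x -> 0 < d -> x * expR (- ln (x / d)) <= d.
Proof.
move=> x_ge0 d_gt0; have [->|x_neq0] := eqVneq x 0; first by rewrite mul0r ltW.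
have x_gt0 : 0 < x by rewrite lt_def x_neq0.
by rewrite expRN lnK ?posrE ?divr_gt0 // invf_div mulrC divfK ?gt_eqF.
Qed.

Lemma sum_ge_le_expR (T : finType) (w X : T -> R) (L : R) :
  (forall x, 0 <= w x) -> \sum_(x | L <= X x) w x <= expR (- L) * \sum_x w x * expR (X x).
Proof.
move=> w_ge0; rewrite mulr_sumr [leRHS](bigID (fun x => L <= X x)) /= -[leLHS]addr0.
apply: lerD.
  apply: ler_sum => x LX; rewrite mulrCA -expRD -[leLHS]mulr1 ler_wpM2l //.
  by apply: le_trans (expR_ge1Dx _); rewrite lerDl addrC subr_ge0.
by apply: sumr_ge0 => x _; rewrite mulr_ge0 ?expR_ge0 // mulr_ge0 ?expR_ge0.
Qed.

End ExponentialMoments.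

Lemma union_bound (R : realType) (T I : finType) (w : T -> R) (E : pred T) (B : I -> pred T) :
  (forall x, 0 <= w x) -> \sum_x w x = 1 -> (forall x, (forall i, ~~ B i x) -> E x) ->
  1 - \sum_i \sum_(x | B i x) w x <= \sum_(x | E x) w x.
Proof.
move=> w_ge0 w_sum1 good_E.
rewrite -w_sum1 (bigID E) /= lerBlDr lerD2l.
have -> : \sum_i \sum_(x | B i x) w x = \sum_x \sum_i (B i x)%:R * w x.
  under eq_bigr => i _ do rewrite big_mkcond /=.
  rewrite exchange_big /=; apply: eq_bigr => x _; apply: eq_bigr => i _.
  by case: (B i x); rewrite ?mul1r ?mul0r.
rewrite [leRHS](bigID E) /= -[leLHS]add0r; apply: lerD.
  by apply: sumr_ge0 => x _; apply: sumr_ge0 => i _; apply: mulr_ge0.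
apply: ler_sum => x not_Ex; have [/existsP [i Bi]|/existsPn no_B] := boolP [exists i, B i x].
  rewrite (bigD1 i) //= Bi mul1r -[leLHS]addr0 lerD2l.
  by apply: sumr_ge0 => j _; apply: mulr_ge0.
by rewrite good_E in not_Ex.
Qed.

Section Deviation.
Variable R : realType.

Definition tilt (L N : R) : R :=
  if 2 * Num.sqrt (L / N) <= 1 then 2 * Num.sqrt (L / N) else 0.

Lemma tilt_bounds (L N : R) : 0 <= tilt L N <= 1.
Proof.
rewrite /tilt; case: ifP => [le1|_]; last by rewrite lexx ler01.
by rewrite le1 andbT mulr_ge0 ?sqrtr_ge0.
Qed.

Lemma dev_le_of_tilted (N L n x : R) : 0 < N -> N / 2 < n -> `|x| <= 1 ->
  (forall sg : bool, n * (tilt L N * ((-1) ^+ sg * x) - tilt L N ^+ 2 / 2) < L) ->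
  `|x| <= 2 * Num.sqrt (L / N).
Proof.
move=> N_gt0 n_gt x_le1 /(_ (x < 0)); rewrite -normrEsign /tilt.
set r := Num.sqrt (L / N) => tilted_lt.
have n_gt0 : 0 < n by apply: lt_trans n_gt; rewrite divr_gt0.
have L_gt0 : 0 < L.
  rewrite ltNge; apply/negP => L_le0; move: tilted_lt.
  have -> : r = 0 by rewrite /r ler0_sqrtr // pmulr_lle0 ?invr_gt0.
  by rewrite mulr0; case: ifP => _; rewrite !mul0r expr0n /= mul0r subr0 mulr0 ltNge L_le0.
have r_gt0 : 0 < r by rewrite sqrtr_gt0 divr_gt0.
have L_eq : L = r ^+ 2 * N by rewrite sqr_sqrtr ?divfK ?gt_eqF // ltW // divr_gt0.
move: tilted_lt; case: ifP => [_ | /negbT]; last by rewrite -ltNge; lra.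
(* if |x| > 2r then n (2r|x| - 2r^2) > 2 n r^2 > r^2 N = L *)
rewrite L_eq => tilted_lt; rewrite leNgt; apply/negP => x_big.
have : 0 < r ^+ 2 * (2 * n - N) by rewrite mulr_gt0 ?exprn_gt0 // subr_gt0; lra.
have : 0 < n * (2 * r * (`|x| - 2 * r)) by rewrite !mulr_gt0 // subr_gt0.
nra.
Qed.

Lemma var_diff_le (h e a b c d : R) : 0 <= a <= h -> 0 <= c <= h ->
  `|a - c| <= h * e -> `|b - d| <= h ^+ 2 * e ->
  `|(b - a ^+ 2) - (d - c ^+ 2)| <= 3 * h ^+ 2 * e.
Proof.
move=> /andP[a_ge0 a_leh] /andP[c_ge0 c_leh] ac_le bd_le.
have -> : (b - a ^+ 2) - (d - c ^+ 2) = (b - d) - (a - c) * (a + c) by ring.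
apply: le_trans (ler_normB _ _) _; rewrite normrM (ger0_norm (addr_ge0 a_ge0 c_ge0)).
have : `|a - c| * (a + c) <= h * e * (2 * h) by apply: ler_pM => //; [apply: addr_ge0 | lra].
lra.
Qed.

Lemma scaled_pow_bounds (h x : R) (k : nat) : 0 < h -> 0 <= x <= h -> 0 <= h ^- k * x ^+ k <= 1.
Proof.
move=> h_gt0 /andP[x_ge0 x_leh].
have /andP[y_ge0 y_le1] : 0 <= h^-1 * x <= 1.
  by rewrite mulr_ge0 ?invr_ge0 ?(ltW h_gt0) //= mulrC ler_pdivrMr ?mul1r.
by rewrite -exprVn -exprMn exprn_ge0 ?exprn_ile1.
Qed.

End Deviation.

Definition fcons (T : Type) n (x : T) (g : {ffun 'I_n -> T}) : {ffun 'I_n.+1 -> T} :=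
  [ffun i => if unlift ord0 i is Some j then g j else x].

Definition ftail (T : Type) n (f : {ffun 'I_n.+1 -> T}) : {ffun 'I_n -> T} :=
  [ffun i => f (lift ord0 i)].

Lemma fcons0 (T : Type) n x (g : {ffun 'I_n -> T}) : fcons x g ord0 = x.
Proof. by rewrite ffunE unlift_none. Qed.

Lemma fconsS (T : Type) n x (g : {ffun 'I_n -> T}) j : fcons x g (lift ord0 j) = g j.
Proof. by rewrite ffunE liftK. Qed.

Lemma sum_ffunS (R : nmodType) (T : finType) n (F : {ffun 'I_n.+1 -> T} -> R) :
  \sum_(f : {ffun 'I_n.+1 -> T}) F f = \sum_(x : T) \sum_(g : {ffun 'I_n -> T}) F (fcons x g).
Proof.
rewrite pair_big /= (reindex (fun p : T * {ffun 'I_n -> T} => fcons p.1 p.2)) //=.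
exists (fun f : {ffun 'I_n.+1 -> T} => (f ord0, ftail f)) => [[x g] _ | f _] /=.
  by rewrite fcons0; congr pair; apply/ffunP => j; rewrite ffunE fconsS.
by apply/ffunP => i; rewrite ffunE; case: unliftP => [j ->|->] //; rewrite ffunE.
Qed.

Section ChainSums.
Variables (R : realType) (S A : finType).

(* The initial weight h is arbitrary so that summing out the first step (chain_sumS)
   stays within the family. *)
Definition chain_sum n (h : S -> R) (f : 'I_n -> S -> A -> S -> R) : R :=
  \sum_(xs : {ffun 'I_n.+1 -> S}) \sum_(as_ : {ffun 'I_n -> A})
    h (xs ord0) * \prod_(u < n) f u (xs (widen_ord (leqnSn n) u)) (as_ u) (xs (lift ord0 u)).

Lemma chain_sum0 (h : S -> R) (f : 'I_0 -> S -> A -> S -> R) : chain_sum h f = \sum_x h x.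
Proof.
rewrite /chain_sum sum_ffunS; apply: eq_bigr => x _.
under eq_bigr => g _ do under eq_bigr => a _ do rewrite big_ord0 mulr1 fcons0.
by rewrite !sumr_const !card_ffun !card_ord !expn0.
Qed.

Lemma chain_sumS n (h : S -> R) (f : 'I_n.+1 -> S -> A -> S -> R) :
  chain_sum h f = chain_sum (fun y => \sum_x \sum_a h x * f ord0 x a y) (fun u => f (lift ord0 u)).
Proof.
rewrite /chain_sum sum_ffunS.
under eq_bigr => x _ do under eq_bigr => xs' _ do rewrite sum_ffunS.
rewrite exchange_big /=; apply: eq_bigr => xs' _.
under eq_bigr => x _ do rewrite exchange_big /=.
rewrite exchange_big /=; apply: eq_bigr => as' _.
rewrite mulr_suml; apply: eq_bigr => x _; rewrite mulr_suml; apply: eq_bigr => a _.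
rewrite big_ord_recl (_ : widen_ord _ ord0 = ord0); last exact: val_inj.
rewrite !fcons0 fconsS mulrA; congr (_ * _).
apply: eq_bigr => u _.
have -> : widen_ord (leqnSn n.+1) (lift ord0 u) = lift ord0 (widen_ord (leqnSn n) u).
  exact: val_inj.
by rewrite !fconsS.
Qed.

Lemma chain_sum_le n (h : S -> R) (f : 'I_n -> S -> A -> S -> R) :
  (forall x, 0 <= h x) -> (forall u x a y, 0 <= f u x a y) ->
  (forall u x, \sum_a \sum_y f u x a y <= 1) -> chain_sum h f <= \sum_x h x.
Proof.
elim: n h f => [|n IH] h f h_ge0 f_ge0 f_sub; first by rewrite chain_sum0.
rewrite chain_sumS; apply: le_trans (IH _ _ _ _ _) _ => //.
- by move=> y; do 2!apply: sumr_ge0 => ? _; apply: mulr_ge0.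
rewrite exchange_big /=; apply: ler_sum => x _; rewrite exchange_big /=.
under eq_bigr => a _ do rewrite -mulr_sumr.
by rewrite -mulr_sumr ler_piMr.
Qed.

Lemma chain_sum_eq n (h : S -> R) (f : 'I_n -> S -> A -> S -> R) :
  (forall u x, \sum_a \sum_y f u x a y = 1) -> chain_sum h f = \sum_x h x.
Proof.
elim: n h f => [|n IH] h f f_stoch; first by rewrite chain_sum0.
rewrite chain_sumS IH //; rewrite exchange_big /=; apply: eq_bigr => x _.
rewrite exchange_big /=; under eq_bigr => a _ do rewrite -mulr_sumr.
by rewrite -mulr_sumr f_stoch mulr1.
Qed.

End ChainSums.

Section Episodes.
Variables (R : realType) (S A : finType) (H : nat).
Variables (d1 : S -> R) (mu : 'I_H -> S -> A -> R) (P : S -> A -> S -> R).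
Hypotheses (d1_distr : is_distr d1) (mu_distr : forall u s, is_distr (mu u s))
  (P_distr : forall s a, is_distr (P s a)).

Lemma traj_prob_ge0 tr : 0 <= traj_prob d1 mu P tr.
Proof.
case: d1_distr => d1_ge0 _; rewrite mulr_ge0 // prodr_ge0 // => u _.
by rewrite mulr_ge0 //; [case: (mu_distr u (st tr u)) | case: (P_distr (st tr u) (act tr u))].
Qed.

Lemma sum_traj_prob_prod (g : S -> A -> S -> R) :
  \sum_(tr : traj S A H)
    traj_prob d1 mu P tr * \prod_(u < H) g (st tr u) (act tr u) (st_next tr u) =
  chain_sum d1 (fun u x a y => mu u x a * P x a y * g x a y).
Proof.
rewrite /chain_sum pair_big /=; apply: eq_bigr => -[xs as_] _.
by rewrite /traj_prob /st /act /st_next /= -mulrA -big_split.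
Qed.

Variable m : nat.

Lemma sum_dataset_prod (F : traj S A H -> R) :
  \sum_(D : dataset S A H m) (\prod_(i < m) traj_prob d1 mu P (D i)) * \prod_(i < m) F (D i) =
  (\sum_tr traj_prob d1 mu P tr * F tr) ^+ m.
Proof.
under eq_bigr => D _ do rewrite -big_split /=.
by rewrite -(bigA_distr_bigA (fun _ tr => traj_prob d1 mu P tr * F tr)) prodr_const card_ord.
Qed.

Lemma Pr_data_total : Pr_data d1 mu P (m:=m) xpredT = 1.
Proof.
rewrite /Pr_data /=; have := sum_dataset_prod (fun _ => 1).
under eq_bigr do rewrite prodr_const expr1n mulr1.
move=> ->; have := sum_traj_prob_prod (fun _ _ _ => 1).
under eq_bigr do rewrite prodr_const expr1n.
move=> ->; rewrite chain_sum_eq; first by case: d1_distr => _ ->; rewrite expr1n.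
move=> u x; rewrite -[RHS](proj2 (mu_distr u x)); apply: eq_bigr => a _.
by under eq_bigr do rewrite mulr1; rewrite -mulr_sumr (proj2 (P_distr x a)) mulr1.
Qed.

Definition Pmean (s : S) (a : A) (W : S -> R) : R := \sum_y P s a y * W y.

Lemma PmeanZ (s : S) (a : A) (c : R) (W : S -> R) : Pmean s a (fun y => c * W y) = c * Pmean s a W.
Proof. by rewrite /Pmean mulr_sumr; apply: eq_bigr => y _; rewrite mulrCA. Qed.

Lemma Pmean_bounds (s : S) (a : A) (W : S -> R) (c : R) :
  (forall y, 0 <= W y <= c) -> 0 <= Pmean s a W <= c.
Proof.
case: (P_distr s a) => P_ge0 P_sum1 W_bnd; rewrite sumr_ge0 => [|y _]; last first.
  by rewrite mulr_ge0 //; case/andP: (W_bnd y).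
rewrite -[leRHS]mulr1 -P_sum1 mulr_sumr ler_sum // => y _.
by rewrite mulrC; apply: ler_wpM2r => //; case/andP: (W_bnd y).
Qed.

Definition tilted_sum (D : dataset S A H m) (s : S) (a : A) (W : S -> R) (sg : bool) (lam : R) :=
  \sum_i \sum_(u < H | (st (D i) u == s) && (act (D i) u == a))
    (lam * ((-1) ^+ sg * (W (st_next (D i) u) - Pmean s a W)) - lam ^+ 2 / 2).

Lemma Pr_tilted_sum_ge (s : S) (a : A) (W : S -> R) (sg : bool) (lam L : R) :
  (forall y, 0 <= W y <= 1) -> 0 <= lam <= 1 ->
  Pr_data d1 mu P (m:=m) (fun D => L <= tilted_sum D s a W sg lam) <= expR (- L).
Proof.
move=> W01 lam01.
pose c y := lam * ((-1) ^+ sg * (W y - Pmean s a W)) - lam ^+ 2 / 2.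
pose g x b y := expR (if (x == s) && (b == a) then c y else 0).
have expR_tilted D : expR (tilted_sum D s a W sg lam) =
    \prod_(i < m) \prod_(u < H) g (st (D i) u) (act (D i) u) (st_next (D i) u).
  by rewrite expR_sum; apply: eq_bigr => i _; rewrite big_mkcond expR_sum.
have data_prob_ge0 (D : dataset S A H m) : 0 <= \prod_(i < m) traj_prob d1 mu P (D i).
  by rewrite prodr_ge0 // => i _; apply: traj_prob_ge0.
apply: le_trans (sum_ge_le_expR _ _ data_prob_ge0) _.
rewrite ler_piMr ?expR_ge0 //.
under eq_bigr do rewrite expR_tilted.
rewrite (sum_dataset_prod (fun tr => \prod_(u < H) g (st tr u) (act tr u) (st_next tr u))).
rewrite exprn_ile1 //.
  rewrite sumr_ge0 // => tr _; rewrite mulr_ge0 ?traj_prob_ge0 // prodr_ge0 // => *.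
  exact: expR_ge0.
have [d1_ge0 d1_sum1] := d1_distr.
rewrite sum_traj_prob_prod -d1_sum1; apply: chain_sum_le => // [u x b y|u x].
  rewrite mulr_ge0 ?expR_ge0 // mulr_ge0 //.
    by case: (mu_distr u x).
  by case: (P_distr x b).
have [mu_ge0 mu_sum1] := mu_distr u x.
rewrite -[leRHS]mu_sum1; apply: ler_sum => b _.
under eq_bigr do rewrite -mulrA; rewrite -mulr_sumr ler_piMr //.
rewrite /g; case: (boolP ((x == s) && (b == a))) => [/andP[/eqP -> /eqP ->] | _]; last first.
  by under eq_bigr do rewrite expR0 mulr1; rewrite (proj2 (P_distr x b)).
have [P_ge0 P_sum1] := P_distr s a.
exact: mgf_unit_interval_le1.
Qed.

Section Empirical.
Variables (D : dataset S A H m) (s : S) (a : A).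

Lemma natr_n_sa :
  (n_sa D s a)%:R = \sum_i \sum_(u < H | (st (D i) u == s) && (act (D i) u == a)) (1 : R).
Proof.
rewrite /n_sa natr_sum; apply: eq_bigr => i _.
by rewrite natr_sum [RHS]big_mkcond; apply: eq_bigr => u _; case: (_ && _).
Qed.

Lemma z_tildeZ (c : R) (W : S -> R) : z_tilde (fun y => c * W y) D s a = c * z_tilde W D s a.
Proof.
rewrite /z_tilde [RHS]mulrCA; congr (_ * _); rewrite mulr_sumr; apply: eq_bigr => i _.
by rewrite mulr_sumr.
Qed.

Lemma z_tilde_bounds (W : S -> R) (c : R) :
  0 <= c -> (forall y, 0 <= W y <= c) -> 0 <= z_tilde W D s a <= c.
Proof.
move=> c_ge0 W_bnd; rewrite /z_tilde.
have [->|n_neq0] := eqVneq (n_sa D s a) 0%N; first by rewrite invr0 mul0r lexx.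
have n_gt0 : 0 < (n_sa D s a)%:R :> R by rewrite ltr0n lt0n.
apply/andP; split.
  rewrite mulr_ge0 ?invr_ge0 ?(ltW n_gt0) //; apply: sumr_ge0 => i _; apply: sumr_ge0 => u _.
  by case/andP: (W_bnd (st_next (D i) u)).
rewrite mulrC ler_pdivrMr // natr_n_sa mulr_sumr ler_sum // => i _.
by rewrite mulr_sumr ler_sum // => u _; rewrite mulr1; case/andP: (W_bnd (st_next (D i) u)).
Qed.

Lemma tilted_sumE (W : S -> R) (sg : bool) (lam : R) : (0 < n_sa D s a)%N ->
  tilted_sum D s a W sg lam =
  (n_sa D s a)%:R * (lam * ((-1) ^+ sg * (z_tilde W D s a - Pmean s a W)) - lam ^+ 2 / 2).
Proof.
move=> n_gt0; rewrite /tilted_sum /z_tilde; set mP := Pmean s a W; set sgn := (-1) ^+ sg.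
have -> : \sum_i \sum_(u < H | (st (D i) u == s) && (act (D i) u == a))
      (lam * (sgn * (W (st_next (D i) u) - mP)) - lam ^+ 2 / 2) =
    lam * sgn * \sum_i \sum_(u < H | (st (D i) u == s) && (act (D i) u == a))
      W (st_next (D i) u) - (lam * sgn * mP + lam ^+ 2 / 2) * (n_sa D s a)%:R.
  rewrite natr_n_sa; set c := lam * sgn * mP + _.
  rewrite (mulr_sumr _ _ _ (lam * sgn)) (mulr_sumr _ _ _ c) -sumrB; apply: eq_bigr => i _.
  rewrite (mulr_sumr _ _ _ (lam * sgn)) (mulr_sumr _ _ _ c) -sumrB.
  by apply: eq_bigr => u _; rewrite /c; ring.
by field; rewrite pnatr_eq0 -lt0n.
Qed.

End Empirical.

Lemma sigma_tilde_dev_le (V : S -> R) (D : dataset S A H m) (s : S) (a : A) (L : R) :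
  (0 < H)%N -> (forall y, 0 <= V y <= H%:R) -> 0 <= L ->
  0 < \sum_(t < H) dmu d1 mu P t s a ->
  (forall k sg : bool, tilted_sum D s a (fun y => H%:R ^- k.+1 * V y ^+ k.+1) sg
       (tilt L (m%:R * \sum_(t < H) dmu d1 mu P t s a)) < L) ->
  `|sigma_tilde d1 mu P V D s a - sigmaV P V s a| <=
     6 * H%:R ^+ 2 * Num.sqrt (L / (m%:R * \sum_(t < H) dmu d1 mu P t s a))
     + 4 * H%:R ^+ 2 * L / (m%:R * \sum_(t < H) dmu d1 mu P t s a).
Proof.
move=> H_gt0 V_bnd L_ge0 ds_gt0 tilted_lt.
set N := m%:R * _ in tilted_lt *; set r := Num.sqrt (L / N).
have H_gt0' : 0 < H%:R :> R by rewrite ltr0n.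
have slack_ge0 : 0 <= 4 * H%:R ^+ 2 * L / N.
  by rewrite !mulr_ge0 ?invr_ge0 ?sqr_ge0 // mulr_ge0 // ltW.
rewrite /sigma_tilde (_ : 2^-1 * m%:R * _ = N / 2); last by rewrite /N; ring.
case: ifPn => [_|]; first by rewrite subrr normr0 addr_ge0 // !mulr_ge0 ?sqr_ge0 ?sqrtr_ge0.
rewrite -ltNge.
set n := (n_sa D s a)%:R => n_big.
have n_gt0 : (0 < n_sa D s a)%N.
  by rewrite -(ltr0n R) -/n; apply: le_lt_trans n_big; rewrite divr_ge0 // /N mulr_ge0 // ltW.
have N_gt0 : 0 < N.
  rewrite /N pmulr_rgt0 // ltr0n lt0n; apply/eqP => m0; move: n_gt0; rewrite /n_sa big1 // => i.
  by exfalso; have := ltn_ord i; rewrite {2}m0.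
have dev (k : bool) : `|z_tilde (fun y => V y ^+ k.+1) D s a -
    Pmean s a (fun y => V y ^+ k.+1)| <= H%:R ^+ k.+1 * (2 * r).
  set W := fun y => H%:R ^- k.+1 * V y ^+ k.+1.
  have W01 y : 0 <= W y <= 1 by apply: scaled_pow_bounds.
  have : `|z_tilde W D s a - Pmean s a W| <= 2 * r.
    apply: (dev_le_of_tilted N_gt0 n_big) => [|sg]; last first.
      by have := tilted_lt k sg; rewrite tilted_sumE.
    have := z_tilde_bounds D s a ler01 W01; have := Pmean_bounds s a W01.
    by move=> /andP[? ?] /andP[? ?]; rewrite ler_norml; apply/andP; split; lra.
  rewrite /W z_tildeZ PmeanZ -mulrBr normrM ger0_norm ?invr_ge0 ?exprn_ge0 ?(ltW H_gt0') //.
  by rewrite mulrC ler_pdivrMr ?exprn_gt0 // [_ * H%:R ^+ _]mulrC.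
have V_mean : 0 <= z_tilde V D s a <= H%:R by apply: z_tilde_bounds; rewrite ?ler0n.
have := var_diff_le V_mean (Pmean_bounds s a V_bnd) (dev false) (dev true).
(* the goal is this inequality with [z_tilde (V^2)] and [sigmaV] unfolded *)
rewrite -/n; lra.
Qed.

End Episodes.

Theorem lemmaC2 (R : realType) (S A : finType) (H m : nat)
  (d1 : S -> R) (mu : 'I_H -> S -> A -> R) (P : S -> A -> S -> R)
  (Vin : 'I_H -> S -> R) (delta : R) :
  is_distr d1 ->
  (forall u s, is_distr (mu u s)) ->
  (forall s a, is_distr (P s a)) ->
  (forall t s, 0 <= Vin t s <= H%:R) ->
  0 < delta < 1 ->
  Pr_data d1 mu P (m:=m)
    (fun D => [forall t : 'I_H, forall s : S, forall a : A,
       (0 < \sum_(t' < H) dmu d1 mu P t' s a) ==>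
       (`|sigma_tilde d1 mu P (Vin t) D s a - sigmaV P (Vin t) s a| <=
          6 * H%:R ^+ 2 *
            Num.sqrt (ln (4 * H%:R * #|S|%:R * #|A|%:R / delta) /
                      (m%:R * \sum_(t' < H) dmu d1 mu P t' s a))
          + 4 * H%:R ^+ 2 * ln (4 * H%:R * #|S|%:R * #|A|%:R / delta) /
                      (m%:R * \sum_(t' < H) dmu d1 mu P t' s a))])
  >= 1 - delta.
Proof.
move=> d1_distr mu_distr P_distr V_bnd /andP[delta_gt0 delta_lt1].
set X := 4 * H%:R * _ * _; set L := ln (X / delta).
pose bad (i : 'I_H * S * A * bool * bool) (D : dataset S A H m) :=
  let: (t, s, a, k, sg) := i in
  L <= tilted_sum P D s a (fun y => H%:R ^- k.+1 * Vin t y ^+ k.+1) sg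
         (tilt L (m%:R * \sum_(t' < H) dmu d1 mu P t' s a)).
have data_prob_ge0 (D : dataset S A H m) : 0 <= \prod_(i < m) traj_prob d1 mu P (D i).
  by rewrite prodr_ge0 // => i _; apply: traj_prob_ge0.
have total := Pr_data_total d1_distr mu_distr P_distr m.
rewrite /Pr_data; apply: le_trans _ (union_bound (B := bad) data_prob_ge0 total _).
  rewrite lerD2l lerN2; apply: (@le_trans _ _ (\sum_(i : 'I_H * S * A * bool * bool) expR (- L))).
    apply: ler_sum => -[[[[t s] a] k] sg] _; apply: Pr_tilted_sum_ge => // [y|].
      by apply: scaled_pow_bounds; rewrite ?V_bnd // ltr0n (leq_ltn_trans _ (ltn_ord t)).
    exact: tilt_bounds.
  rewrite sumr_const !card_prod card_ord !card_bool -mulr_natl !natrM.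
  rewrite (_ : _ * _ * _ * _%:R * _%:R = X); last by rewrite /X; ring.
  by apply: mulr_expRNln_div_le => //; rewrite /X !mulr_ge0.
move=> D good; apply/forallP => t; apply/forallP => s; apply/forallP => a; apply/implyP => ds_gt0.
have H_gt0 : (0 < H)%N := leq_ltn_trans (leq0n t) (ltn_ord t).
apply: sigma_tilde_dev_le => // [|k sg]; last by rewrite ltNge; apply: good (t, s, a, k, sg).
apply: ln_ge0; rewrite ler_pdivlMr // mul1r (le_trans (ltW delta_lt1)) // /X -!natrM ler1n.
by rewrite !muln_gt0 H_gt0 /=; apply/andP; split; apply/card_gt0P; [exists s | exists a].
Qed.
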